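(* Let $\{(\Gamma_t,\theta_t)\}_{t\in[0,\underline t)}$ evolve by $\partial_t\gamma=\kappa\nu_\theta+\upsilon_T T$, $\partial_t\theta=\upsilon_\theta$, where for all $t\in[0,\underline t)$ and all $s\in\mathbb{R}/L(\Gamma_t)\mathbb{Z}$ (arclength measured from the point $u=0$) the tangential velocity satisfies $$\upsilon_T(t,s)=\upsilon_{T,0}(t)+\int_0^s\kappa\psi_1\,d\bar s-\frac{s}{L(\Gamma_t)}\int_{\Gamma_t}\kappa\psi_1\,d\bar s,$$ with $\upsilon_{T,0}\in\mathcal C^1([0,\underline t))$ arbitrary. Then for every $u\in S^1$ the quantity $g(t,u)/L(\Gamma_t)$ is constant in $t$.
   Context: $S^1=\mathbb{R}/2\pi\mathbb{Z}$; $\Gamma_t$ is a closed curve parametrized by $\gamma(t,\cdot):S^1\to\mathbb{R}^3$, $g=\|\partial_u\gamma\|$, $ds=g\,du$, $\partial_s=g^{-1}\partial_u$, $L(\Gamma_t)=\int_{\Gamma_t}ds$ its length. $T,N,B$ is the Frenet frame, $\kappa$ the curvature. For an angle function $\theta(t,u)\in S^1$, $\nu_\theta=\cos\theta\,N+\sin\theta\,B$ and $\psi_1=\kappa\cos\theta$ (note $\kappa\nu_\theta=\cos\theta\,\partial_s^2\gamma+\sin\theta\,\partial_s\gamma\times\partial_s^2\gamma$). $\upsilon_\theta$ is a given $\mathcal C^1$ function. *)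

From Stdlib Require Import Reals.
From Coquelicot Require Import Coquelicot.
Open Scope R_scope.

Definition V3 := (R * R * R)%type.
Definition mkV (a b c : R) : V3 := ((a, b), c).
Definition vx (v : V3) : R := fst (fst v).
Definition vy (v : V3) : R := snd (fst v).
Definition vz (v : V3) : R := snd v.
Definition vadd (v w : V3) : V3 := mkV (vx v + vx w) (vy v + vy w) (vz v + vz w).
Definition vscale (a : R) (v : V3) : V3 := mkV (a * vx v) (a * vy v) (a * vz v).
Definition vdot (v w : V3) : R := vx v * vx w + vy v * vy w + vz v * vz w.
Definition vcross (v w : V3) : V3 :=
  mkV (vy v * vz w - vz v * vy w) (vz v * vx w - vx v * vz w) (vx v * vy w - vy v * vx w).
Definition vnorm (v : V3) : R := sqrt (vdot v v).

Definition pdt (f : R -> R -> R) (t u : R) : R := Derive (fun t' => f t' u) t.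
Definition pdu (f : R -> R -> R) (t u : R) : R := Derive (fun u' => f t u') u.
Definition pdtV (c : R -> R -> V3) (t u : R) : V3 :=
  mkV (pdt (fun t u => vx (c t u)) t u) (pdt (fun t u => vy (c t u)) t u)
      (pdt (fun t u => vz (c t u)) t u).
Definition pduV (c : R -> R -> V3) (t u : R) : V3 :=
  mkV (pdu (fun t u => vx (c t u)) t u) (pdu (fun t u => vy (c t u)) t u)
      (pdu (fun t u => vz (c t u)) t u).

Definition cont2 (f : R -> R -> R) (t u : R) : Prop :=
  continuous (fun p : R * R => f (fst p) (snd p)) (t, u).

Fixpoint Ck_on (k : nat) (D : R -> R -> Prop) (f : R -> R -> R) : Prop :=
  (forall t u, D t u -> cont2 f t u) /\
  match k with
  | O => True
  | S k' =>
      (forall t u, D t u -> ex_derive (fun t' => f t' u) t /\ ex_derive (fun u' => f t u') u)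
      /\ Ck_on k' D (pdt f) /\ Ck_on k' D (pdu f)
  end.

Definition smooth_on (D : R -> R -> Prop) (f : R -> R -> R) : Prop := forall k, Ck_on k D f.

Definition smoothV_on (D : R -> R -> Prop) (c : R -> R -> V3) : Prop :=
  smooth_on D (fun t u => vx (c t u)) /\ smooth_on D (fun t u => vy (c t u)) /\
  smooth_on D (fun t u => vz (c t u)).

Definition cont2_within (D : R -> R -> Prop) (f : R -> R -> R) (t u : R) : Prop :=
  filterlim (fun p : R * R => f (fst p) (snd p))
    (within (fun p : R * R => D (fst p) (snd p)) (locally (t, u))) (locally (f t u)).

(** Geometric quantities of gamma(t,.) : parameter u in R, 2*PI-periodic *)
Definition speed (c : R -> R -> V3) (t u : R) : R := vnorm (pduV c t u).
Definition tangent (c : R -> R -> V3) (t u : R) : V3 := vscale (/ speed c t u) (pduV c t u).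
Definition dss (c : R -> R -> V3) (t u : R) : V3 :=
  vscale (/ speed c t u) (pduV (tangent c) t u).
Definition curvature (c : R -> R -> V3) (t u : R) : R := vnorm (dss c t u).
Definition kappa_nu (c : R -> R -> V3) (th : R -> R -> R) (t u : R) : V3 :=
  vadd (vscale (cos (th t u)) (dss c t u))
       (vscale (sin (th t u)) (vcross (tangent c t u) (dss c t u))).
Definition psi1 (c : R -> R -> V3) (th : R -> R -> R) (t u : R) : R :=
  curvature c t u * cos (th t u).
Definition curve_length (c : R -> R -> V3) (t : R) : R :=
  RInt (fun u => speed c t u) 0 (2 * PI).
Definition arclen (c : R -> R -> V3) (t u : R) : R :=
  RInt (fun w => speed c t w) 0 u.
(* int_0^{s(u)} kappa psi_1 ds = int_0^u kappa psi_1 g du *)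
Definition int_kpsi (c : R -> R -> V3) (th : R -> R -> R) (t u : R) : R :=
  RInt (fun w => curvature c t w * psi1 c th t w * speed c t w) 0 u.

From Stdlib Require Import Reals Lra ZArith.
From Coquelicot Require Import Coquelicot.
Open Scope R_scope.

(* The speed g = |d_u gamma| evolves by d_t g = <T, d_u d_t gamma> = d_u upsilon_T - kappa psi_1 g:
   the normal part kappa nu_theta of d_t gamma contributes <d_u T, kappa nu_theta> = g kappa psi_1
   to d_u <T, d_t gamma> = d_u upsilon_T.  For the prescribed tangential velocity
   d_u upsilon_T = kappa psi_1 g - (g / L) int kappa psi_1, hence d_t log g = -(1/L) int kappa psi_1
   does not depend on u.  So g(t, .) is a constant multiple of g(t', .): for t, t' > 0 by the mean
   value theorem, then at t = 0 and at the seam u = 0 mod 2 pi by continuity.  The constant cancels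
   in g / L. *)

(** * Calculus of curves in R^3 *)

Lemma vdot_comm (v w : V3) : vdot v w = vdot w v.
Proof. unfold vdot; ring. Qed.

Lemma vdot_scale_l (a : R) (v w : V3) : vdot (vscale a v) w = a * vdot v w.
Proof. unfold vdot; cbn; ring. Qed.

Lemma vdot_scale_r (a : R) (v w : V3) : vdot v (vscale a w) = a * vdot v w.
Proof. unfold vdot; cbn; ring. Qed.

Lemma vdot_add_r (u v w : V3) : vdot u (vadd v w) = vdot u v + vdot u w.
Proof. unfold vdot; cbn; ring. Qed.

Lemma vdot_cross_l (v w : V3) : vdot v (vcross v w) = 0.
Proof. unfold vdot; cbn; ring. Qed.

Lemma vdot_cross_r (v w : V3) : vdot w (vcross v w) = 0.
Proof. unfold vdot; cbn; ring. Qed.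

Lemma vscale_scale_inv (a : R) (v : V3) : a <> 0 -> vscale a (vscale (/ a) v) = v.
Proof.
  intros Ha; destruct v as [[x y] z]; unfold vscale, mkV; cbn.
  now rewrite <- !Rmult_assoc, Rinv_r, !Rmult_1_l.
Qed.

Lemma vnorm_mul_self (v : V3) : vnorm v * vnorm v = vdot v v.
Proof. apply sqrt_sqrt; unfold vdot; nra. Qed.

Lemma vdot_self_pos (v : V3) : 0 < vnorm v -> 0 < vdot v v.
Proof.
  unfold vnorm; intros Hn.
  destruct (Rle_or_lt (vdot v v) 0) as [Hle|]; [|assumption].
  rewrite sqrt_neg_0 in Hn; lra.
Qed.

Ltac is_derive_value_eq :=
  match goal with |- is_derive ?f ?x _ => eapply (@eq_ind R _ (is_derive f x)) end.

Definition is_deriveV (c : R -> V3) (x : R) (l : V3) : Prop :=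
  is_derive (fun y => vx (c y)) x (vx l) /\ is_derive (fun y => vy (c y)) x (vy l) /\
  is_derive (fun y => vz (c y)) x (vz l).

Definition ex_deriveV (c : R -> V3) (x : R) : Prop := exists l, is_deriveV c x l.

(* [pduV c t u] is definitionally [DeriveV (c t) u], and [pdtV c t u] is
   [DeriveV (fun s => c s u) t]. *)
Definition DeriveV (c : R -> V3) (x : R) : V3 :=
  mkV (Derive (fun y => vx (c y)) x) (Derive (fun y => vy (c y)) x)
      (Derive (fun y => vz (c y)) x).

Lemma DeriveV_correct (c : R -> V3) (x : R) : ex_deriveV c x -> is_deriveV c x (DeriveV c x).
Proof.
  intros [l (Hx & Hy & Hz)].
  split; [|split]; apply Derive_correct; eexists; eassumption.
Qed.

Lemma is_deriveV_unique (c : R -> V3) (x : R) (l : V3) : is_deriveV c x l -> DeriveV c x = l.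
Proof.
  destruct l as [[a b] d]; intros (Hx & Hy & Hz); unfold DeriveV, mkV.
  f_equal; [f_equal|]; now apply is_derive_unique.
Qed.

Lemma ex_deriveV_components (c : R -> V3) (x : R) :
  ex_derive (fun y => vx (c y)) x -> ex_derive (fun y => vy (c y)) x ->
  ex_derive (fun y => vz (c y)) x -> ex_deriveV c x.
Proof.
  intros Hx Hy Hz; exists (DeriveV c x).
  split; [|split]; now apply Derive_correct.
Qed.

Lemma is_deriveV_ext (c1 c2 : R -> V3) (x : R) (l : V3) :
  (forall y, c1 y = c2 y) -> is_deriveV c1 x l -> is_deriveV c2 x l.
Proof.
  intros E (Hx & Hy & Hz).
  split; [|split]; [revert Hx | revert Hy | revert Hz]; apply is_derive_ext;
    intros y; now rewrite E.
Qed.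

Lemma ex_deriveV_ext (c1 c2 : R -> V3) (x : R) :
  (forall y, c1 y = c2 y) -> ex_deriveV c1 x -> ex_deriveV c2 x.
Proof. intros E [l Hl]; exists l; exact (is_deriveV_ext _ _ _ _ E Hl). Qed.

Lemma is_deriveV_add (a b : R -> V3) (x : R) (da db : V3) :
  is_deriveV a x da -> is_deriveV b x db ->
  is_deriveV (fun y => vadd (a y) (b y)) x (vadd da db).
Proof.
  intros (Ha1 & Ha2 & Ha3) (Hb1 & Hb2 & Hb3).
  split; [|split]; [exact (is_derive_plus _ _ _ _ _ Ha1 Hb1)
  | exact (is_derive_plus _ _ _ _ _ Ha2 Hb2) | exact (is_derive_plus _ _ _ _ _ Ha3 Hb3)].
Qed.

Lemma is_deriveV_scale (f : R -> R) (a : R -> V3) (x df : R) (da : V3) :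
  is_derive f x df -> is_deriveV a x da ->
  is_deriveV (fun y => vscale (f y) (a y)) x (vadd (vscale df (a x)) (vscale (f x) da)).
Proof.
  intros Hf (Ha1 & Ha2 & Ha3).
  split; [|split]; [exact (is_derive_mult _ _ _ _ _ Hf Ha1 Rmult_comm)
  | exact (is_derive_mult _ _ _ _ _ Hf Ha2 Rmult_comm)
  | exact (is_derive_mult _ _ _ _ _ Hf Ha3 Rmult_comm)].
Qed.

Lemma is_derive_vdot (a b : R -> V3) (x : R) (da db : V3) :
  is_deriveV a x da -> is_deriveV b x db ->
  is_derive (fun y : R => vdot (a y) (b y)) x (vdot da (b x) + vdot (a x) db).
Proof.
  intros (Ha1 & Ha2 & Ha3) (Hb1 & Hb2 & Hb3).
  is_derive_value_eq.
  - exact (is_derive_plus _ _ _ _ _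
      (is_derive_plus _ _ _ _ _ (is_derive_mult _ _ _ _ _ Ha1 Hb1 Rmult_comm)
         (is_derive_mult _ _ _ _ _ Ha2 Hb2 Rmult_comm))
      (is_derive_mult _ _ _ _ _ Ha3 Hb3 Rmult_comm)).
  - unfold vdot; cbn; ring.
Qed.

Lemma is_derive_vnorm (a : R -> V3) (x : R) (da : V3) :
  is_deriveV a x da -> 0 < vnorm (a x) ->
  is_derive (fun y : R => vnorm (a y)) x (vdot (a x) da / vnorm (a x)).
Proof.
  intros Ha Hn.
  is_derive_value_eq.
  - exact (is_derive_sqrt _ _ _ (is_derive_vdot a a x da da Ha Ha) (vdot_self_pos _ Hn)).
  - rewrite (vdot_comm da); fold (vnorm (a x)); field; lra.
Qed.

Lemma is_deriveV_normalize (p : R -> V3) (x : R) (dp : V3) :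
  is_deriveV p x dp -> 0 < vnorm (p x) ->
  is_deriveV (fun y => vscale (/ vnorm (p y)) (p y)) x
    (vadd (vscale (- (vdot (p x) dp / vnorm (p x)) / vnorm (p x) ^ 2) (p x))
          (vscale (/ vnorm (p x)) dp)).
Proof.
  intros Hp Hn.
  apply (is_deriveV_scale (fun y => / vnorm (p y)) p); [|exact Hp].
  exact (is_derive_inv _ _ _ (is_derive_vnorm _ _ _ Hp Hn) (Rgt_not_eq _ _ Hn)).
Qed.

Lemma ex_deriveV_add (a b : R -> V3) (x : R) :
  ex_deriveV a x -> ex_deriveV b x -> ex_deriveV (fun y => vadd (a y) (b y)) x.
Proof. intros [da Ha] [db Hb]; eexists; exact (is_deriveV_add _ _ _ _ _ Ha Hb). Qed.

Lemma ex_deriveV_scale (f : R -> R) (a : R -> V3) (x : R) :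
  ex_derive f x -> ex_deriveV a x -> ex_deriveV (fun y => vscale (f y) (a y)) x.
Proof. intros [df Hf] [da Ha]; eexists; exact (is_deriveV_scale _ _ _ _ _ Hf Ha). Qed.

Lemma ex_derive_vdot (a b : R -> V3) (x : R) :
  ex_deriveV a x -> ex_deriveV b x -> ex_derive (fun y => vdot (a y) (b y)) x.
Proof. intros [da Ha] [db Hb]; eexists; exact (is_derive_vdot _ _ _ _ _ Ha Hb). Qed.

Lemma ex_derive_vnorm (a : R -> V3) (x : R) :
  ex_deriveV a x -> 0 < vnorm (a x) -> ex_derive (fun y => vnorm (a y)) x.
Proof. intros [da Ha] Hn; eexists; exact (is_derive_vnorm _ _ _ Ha Hn). Qed.

Lemma smooth_on_pdt (D : R -> R -> Prop) (f : R -> R -> R) :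
  smooth_on D f -> smooth_on D (pdt f).
Proof. intros H k; exact (proj1 (proj2 (proj2 (H (S k))))). Qed.

Lemma smooth_on_pdu (D : R -> R -> Prop) (f : R -> R -> R) :
  smooth_on D f -> smooth_on D (pdu f).
Proof. intros H k; exact (proj2 (proj2 (proj2 (H (S k))))). Qed.

Lemma smooth_on_ex_derive (D : R -> R -> Prop) (f : R -> R -> R) (t u : R) :
  smooth_on D f -> D t u -> ex_derive (fun s => f s u) t /\ ex_derive (fun w => f t w) u.
Proof. intros H Hd; exact (proj1 (proj2 (H 1%nat)) t u Hd). Qed.

Lemma smooth_on_pdt_pdu (D : R -> R -> Prop) (f : R -> R -> R) (t u : R) :
  smooth_on D f -> locally_2d D t u -> pdt (pdu f) t u = pdu (pdt f) t u.
Proof.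
  intros Hf HD.
  assert (Hcont : forall h, smooth_on D h -> continuity_2d_pt h t u).
  { intros h Hh; apply continuity_2d_pt_filterlim.
    exact (proj1 (Hh O) t u (locally_2d_singleton _ _ _ HD)). }
  apply Schwarz.
  - apply (locally_2d_impl D); [apply locally_2d_forall; intros a b Hab | exact HD].
    split; [|split; [|split]].
    + exact (proj1 (smooth_on_ex_derive D f a b Hf Hab)).
    + exact (proj2 (smooth_on_ex_derive D f a b Hf Hab)).
    + exact (proj1 (smooth_on_ex_derive D (pdu f) a b (smooth_on_pdu D f Hf) Hab)).
    + exact (proj2 (smooth_on_ex_derive D (pdt f) a b (smooth_on_pdt D f Hf) Hab)).
  - exact (Hcont _ (smooth_on_pdt D _ (smooth_on_pdu D f Hf))).
  - exact (Hcont _ (smooth_on_pdu D _ (smooth_on_pdt D f Hf))).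
Qed.

Lemma smoothV_on_pduV (D : R -> R -> Prop) (c : R -> R -> V3) :
  smoothV_on D c -> smoothV_on D (pduV c).
Proof.
  intros (Hx & Hy & Hz).
  split; [|split]; [exact (smooth_on_pdu D _ Hx) | exact (smooth_on_pdu D _ Hy)
  | exact (smooth_on_pdu D _ Hz)].
Qed.

Lemma smoothV_on_pdtV (D : R -> R -> Prop) (c : R -> R -> V3) :
  smoothV_on D c -> smoothV_on D (pdtV c).
Proof.
  intros (Hx & Hy & Hz).
  split; [|split]; [exact (smooth_on_pdt D _ Hx) | exact (smooth_on_pdt D _ Hy)
  | exact (smooth_on_pdt D _ Hz)].
Qed.

Lemma smoothV_on_ex_deriveV (D : R -> R -> Prop) (c : R -> R -> V3) (t u : R) :
  smoothV_on D c -> D t u -> ex_deriveV (fun s => c s u) t /\ ex_deriveV (c t) u.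
Proof.
  intros (Hx & Hy & Hz) Hd.
  destruct (smooth_on_ex_derive D _ t u Hx Hd), (smooth_on_ex_derive D _ t u Hy Hd),
    (smooth_on_ex_derive D _ t u Hz Hd).
  split; now apply ex_deriveV_components.
Qed.

Lemma smoothV_on_pdtV_pduV (D : R -> R -> Prop) (c : R -> R -> V3) (t u : R) :
  smoothV_on D c -> locally_2d D t u -> pdtV (pduV c) t u = pduV (pdtV c) t u.
Proof.
  intros (Hx & Hy & Hz) HD.
  change (mkV (pdt (pdu (fun t u => vx (c t u))) t u) (pdt (pdu (fun t u => vy (c t u))) t u)
    (pdt (pdu (fun t u => vz (c t u))) t u) =
    mkV (pdu (pdt (fun t u => vx (c t u))) t u) (pdu (pdt (fun t u => vy (c t u))) t u)
    (pdu (pdt (fun t u => vz (c t u))) t u)).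
  now rewrite (smooth_on_pdt_pdu D _ t u Hx HD), (smooth_on_pdt_pdu D _ t u Hy HD),
    (smooth_on_pdt_pdu D _ t u Hz HD).
Qed.

Lemma locally_2d_strip (tb t u : R) : 0 < t < tb -> locally_2d (fun s _ => 0 < s < tb) t u.
Proof.
  intros Ht.
  assert (Hd : 0 < Rmin t (tb - t)) by (apply Rmin_glb_lt; lra).
  exists (mkposreal _ Hd); intros a b Ha _; cbn in Ha.
  pose proof (Rmin_l t (tb - t)); pose proof (Rmin_r t (tb - t)).
  apply Rabs_def2 in Ha; lra.
Qed.

(** * The Frenet frame and the first variation of the speed *)

Section CurveAtTime.

Variables (gam : R -> R -> V3) (t : R).
Hypothesis speed_pos : forall u, 0 < speed gam t u.
Hypothesis dP : forall u, ex_deriveV (pduV gam t) u.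

Lemma is_deriveV_tangent_expr (u : R) :
  let P := pduV gam t in
  is_deriveV (tangent gam t) u
    (vadd (vscale (- (vdot (P u) (DeriveV P u) / vnorm (P u)) / vnorm (P u) ^ 2) (P u))
          (vscale (/ vnorm (P u)) (DeriveV P u))).
Proof. exact (is_deriveV_normalize _ _ _ (DeriveV_correct _ _ (dP u)) (speed_pos u)). Qed.

Lemma is_deriveV_tangent (u : R) :
  is_deriveV (tangent gam t) u (vscale (speed gam t u) (dss gam t u)).
Proof.
  unfold dss; rewrite vscale_scale_inv by (apply Rgt_not_eq, speed_pos).
  apply DeriveV_correct; eexists; apply is_deriveV_tangent_expr.
Qed.

Lemma tangent_unit (u : R) : vdot (tangent gam t u) (tangent gam t u) = 1.
Proof.
  pose proof (speed_pos u) as Hg; unfold tangent, speed in *.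
  rewrite vdot_scale_l, vdot_scale_r, <- vnorm_mul_self; field; lra.
Qed.

Lemma tangent_dss_orth (u : R) : vdot (tangent gam t u) (dss gam t u) = 0.
Proof.
  pose proof (speed_pos u) as Hg.
  assert (D := is_derive_vdot _ _ _ _ _ (is_deriveV_tangent u) (is_deriveV_tangent u)).
  assert (D1 : is_derive (fun w : R => vdot (tangent gam t w) (tangent gam t w)) u 0).
  { apply (is_derive_ext (fun _ => 1)); [intros w; now rewrite tangent_unit|].
    exact (is_derive_const (K := R_AbsRing) (V := R_NormedModule) 1 u). }
  apply is_derive_unique in D; apply is_derive_unique in D1.
  rewrite D1, vdot_comm, !vdot_scale_r in D.
  apply (Rmult_eq_reg_l (2 * speed gam t u)); lra.
Qed.

Lemma continuous_speed (u : R) : continuous (speed gam t) u.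
Proof. exact (ex_derive_continuous _ _ (ex_derive_vnorm _ _ (dP u) (speed_pos u))). Qed.

Lemma ex_deriveV_dss (u : R) :
  (forall w, ex_deriveV (pduV (pduV gam) t) w) -> ex_deriveV (dss gam t) u.
Proof.
  intros ddP; pose proof (speed_pos u) as Hg.
  apply (ex_deriveV_scale (fun w => / speed gam t w)).
  { apply ex_derive_inv; [exact (ex_derive_vnorm _ _ (dP u) Hg) | lra]. }
  apply (ex_deriveV_ext (fun w => vadd
    (vscale (- (vdot (pduV gam t w) (DeriveV (pduV gam t) w) / speed gam t w)
             / speed gam t w ^ 2) (pduV gam t w))
    (vscale (/ speed gam t w) (DeriveV (pduV gam t) w)))).
  { intros w; symmetry; apply is_deriveV_unique, is_deriveV_tangent_expr. }
  apply ex_deriveV_add; apply ex_deriveV_scale; try apply ddP; try apply dP.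
  - apply ex_derive_div; [|apply ex_derive_pow, (ex_derive_vnorm _ _ (dP u) Hg)|].
    + apply (ex_derive_opp (fun w => _ / _)), ex_derive_div;
        [apply ex_derive_vdot; [apply dP | apply ddP] | exact (ex_derive_vnorm _ _ (dP u) Hg)
        | lra].
    + apply pow_nonzero; lra.
  - apply ex_derive_inv; [exact (ex_derive_vnorm _ _ (dP u) Hg) | lra].
Qed.

Variables (th vT : R -> R -> R).
Hypothesis evolution : forall u,
  pdtV gam t u = vadd (kappa_nu gam th t u) (vscale (vT t u) (tangent gam t u)).

Lemma tangential_velocity_eq (u : R) : vT t u = vdot (tangent gam t u) (pdtV gam t u).
Proof.
  rewrite evolution; unfold kappa_nu.
  rewrite !vdot_add_r, !vdot_scale_r, tangent_dss_orth, vdot_cross_l, tangent_unit; ring.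
Qed.

Lemma dss_dot_velocity (u : R) :
  vdot (dss gam t u) (pdtV gam t u) = curvature gam t u * psi1 gam th t u.
Proof.
  rewrite evolution; unfold kappa_nu, psi1, curvature.
  rewrite !vdot_add_r, !vdot_scale_r, vdot_cross_r, (vdot_comm _ (tangent gam t u)),
    tangent_dss_orth, <- vnorm_mul_self; ring.
Qed.

(* Differentiate upsilon_T = <T, d_t gamma> in u: d_u T = g d_s^2 gamma only sees the
   normal part kappa nu_theta of d_t gamma. *)
Lemma tangent_dot_pduV_pdtV (u : R) :
  ex_deriveV (pdtV gam t) u ->
  vdot (tangent gam t u) (pduV (pdtV gam) t u) =
  Derive (vT t) u - curvature gam t u * psi1 gam th t u * speed gam t u.
Proof.
  intros dW.
  assert (D := is_derive_vdot _ _ _ _ _ (is_deriveV_tangent u) (DeriveV_correct _ _ dW)).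
  apply is_derive_unique in D.
  rewrite (Derive_ext _ _ _ tangential_velocity_eq), D, vdot_scale_l, dss_dot_velocity.
  change (pduV (pdtV gam) t u) with (DeriveV (pdtV gam t) u); ring.
Qed.

Lemma continuous_kpsi_speed (u : R) :
  (forall w, ex_deriveV (pduV (pduV gam) t) w) -> (forall w, ex_derive (th t) w) ->
  continuous (fun w => curvature gam t w * psi1 gam th t w * speed gam t w) u.
Proof.
  intros ddP dth.
  apply (continuous_ext
    (fun w => vdot (dss gam t w) (dss gam t w) * cos (th t w) * speed gam t w)).
  { intros w; cbn -[vdot vnorm dss speed]; unfold psi1, curvature.
    rewrite <- vnorm_mul_self; ring. }
  apply (ex_derive_continuous (K := R_AbsRing) (V := R_NormedModule)).
  apply ex_derive_mult; [apply ex_derive_mult|].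
  - apply ex_derive_vdot; now apply ex_deriveV_dss.
  - auto_derive; apply dth.
  - exact (ex_derive_vnorm _ _ (dP u) (speed_pos u)).
Qed.

End CurveAtTime.

Lemma is_derive_speed_time (tb : R) (gam : R -> R -> V3) (th vT : R -> R -> R) (t u : R) :
  smoothV_on (fun s _ => 0 < s < tb) gam -> 0 < t < tb ->
  (forall w, 0 < speed gam t w) ->
  (forall w, pdtV gam t w = vadd (kappa_nu gam th t w) (vscale (vT t w) (tangent gam t w))) ->
  is_derive (fun s => speed gam s u) t
    (Derive (vT t) u - curvature gam t u * psi1 gam th t u * speed gam t u).
Proof.
  intros Hs Ht Hpos Hev.
  assert (dP : forall w, ex_deriveV (pduV gam t) w)
    by (intros w; exact (proj2 (smoothV_on_ex_deriveV _ _ t w (smoothV_on_pduV _ _ Hs) Ht))).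
  assert (dW := proj2 (smoothV_on_ex_deriveV _ _ t u (smoothV_on_pdtV _ _ Hs) Ht)).
  assert (dPt := proj1 (smoothV_on_ex_deriveV _ _ t u (smoothV_on_pduV _ _ Hs) Ht)).
  is_derive_value_eq.
  - exact (is_derive_vnorm (fun s => pduV gam s u) t _ (DeriveV_correct _ _ dPt) (Hpos u)).
  - rewrite <- (tangent_dot_pduV_pdtV gam t Hpos dP th vT Hev u dW).
    change (DeriveV (fun s => pduV gam s u) t) with (pdtV (pduV gam) t u).
    rewrite (smoothV_on_pdtV_pduV _ _ t u Hs (locally_2d_strip tb t u Ht)).
    unfold tangent, speed; rewrite vdot_scale_l; unfold Rdiv; ring.
Qed.

Lemma is_derive_RInt_continuous (h : R -> R) (x : R) :
  (forall y, continuous h y) -> is_derive (fun b => RInt h 0 b) x (h x).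
Proof.
  intros Hc; apply (is_derive_RInt h (fun b => RInt h 0 b) 0 x); [|apply Hc].
  apply filter_forall; intros b; apply (RInt_correct (V := R_CompleteNormedModule)).
  apply (ex_RInt_continuous (V := R_CompleteNormedModule)); intros; apply Hc.
Qed.

Lemma is_derive_tangential_velocity (tb : R) (gam : R -> R -> V3) (th vT : R -> R -> R)
  (vT0 : R -> R) (t u : R) :
  smoothV_on (fun s _ => 0 < s < tb) gam -> smooth_on (fun s _ => 0 < s < tb) th ->
  0 < t < tb -> (forall w, 0 < speed gam t w) ->
  (forall w, 0 <= w < 2 * PI ->
     vT t w = vT0 t + int_kpsi gam th t w
              - arclen gam t w / curve_length gam t * int_kpsi gam th t (2 * PI)) ->
  0 < u < 2 * PI ->
  is_derive (vT t) u (curvature gam t u * psi1 gam th t u * speed gam t u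
                      - speed gam t u / curve_length gam t * int_kpsi gam th t (2 * PI)).
Proof.
  intros Hs Hsth Ht Hpos Hform Hu.
  assert (dP : forall w, ex_deriveV (pduV gam t) w)
    by (intros w; exact (proj2 (smoothV_on_ex_deriveV _ _ t w (smoothV_on_pduV _ _ Hs) Ht))).
  assert (ddP : forall w, ex_deriveV (pduV (pduV gam) t) w).
  { intros w; exact (proj2 (smoothV_on_ex_deriveV _ _ t w
      (smoothV_on_pduV _ _ (smoothV_on_pduV _ _ Hs)) Ht)). }
  assert (dth : forall w, ex_derive (th t) w)
    by (intros w; exact (proj2 (smooth_on_ex_derive _ _ t w Hsth Ht))).
  apply (is_derive_ext_loc (fun w => vT0 t + int_kpsi gam th t w
           - arclen gam t w / curve_length gam t * int_kpsi gam th t (2 * PI))).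
  { apply (filter_imp (fun w => 0 < w < 2 * PI));
      [intros w Hw; symmetry; apply Hform; lra|].
    exact (open_and _ _ (open_gt 0) (open_lt (2 * PI)) u Hu). }
  is_derive_value_eq.
  - assert (Dk := is_derive_RInt_continuous _ u
      (fun y => continuous_kpsi_speed gam t Hpos dP th y ddP dth)).
    assert (Ds := is_derive_RInt_continuous _ u (continuous_speed gam t Hpos dP)).
    exact (is_derive_minus _ _ _ _ _ (is_derive_plus _ _ _ _ _ (is_derive_const (vT0 t) u) Dk)
      (is_derive_scal_l _ _ _ (int_kpsi gam th t (2 * PI))
         (is_derive_scal_l _ _ _ (/ curve_length gam t) Ds))).
  - cbn; unfold Rdiv; ring.
Qed.

(** * One-variable analysis *)

Lemma same_log_derivative (f h a : R -> R) (lo hi : R) :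
  (forall s, lo < s < hi -> is_derive f s (a s * f s)) ->
  (forall s, lo < s < hi -> is_derive h s (a s * h s)) ->
  (forall s, lo < s < hi -> h s <> 0) ->
  forall s s', lo < s < hi -> lo < s' < hi -> f s * h s' = f s' * h s.
Proof.
  intros Hf Hh Hh0.
  assert (Hle : forall s s', lo < s < hi -> lo < s' < hi -> s <= s' ->
            f s / h s = f s' / h s').
  { intros s s' Hs Hs' Hss'; destruct (Req_dec s s') as [<-|Hne]; [reflexivity|].
    apply (eq_is_derive (fun y => f y / h y)); [intros y Hy | lra].
    is_derive_value_eq; [apply is_derive_div; [apply Hf | apply Hh | apply Hh0]; lra|].
    cbn; field; apply Hh0; lra. }
  intros s s' Hs Hs'.
  assert (E : f s / h s = f s' / h s').
  { destruct (Rle_or_lt s s'); [now apply Hle | symmetry; apply Hle; auto; lra]. }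
  assert (h s <> 0) by now apply Hh0.
  assert (h s' <> 0) by now apply Hh0.
  replace (f s) with (f s / h s * h s) by (field; auto).
  replace (f s') with (f s' / h s' * h s') by (field; auto).
  rewrite E; ring.
Qed.

Lemma right_limit_lin (f h : R -> R) (a b lo hi : R) :
  lo < hi -> (forall s, lo < s < hi -> a * f s = b * h s) ->
  filterlim f (at_right lo) (locally (f lo)) -> filterlim h (at_right lo) (locally (h lo)) ->
  a * f lo = b * h lo.
Proof.
  intros Hlh E Hf Hh.
  apply (filterlim_locally_unique (F := at_right lo) (fun s => a * f s)).
  - exact (filterlim_comp _ _ _ f (scal a) _ _ _ Hf (filterlim_scal_r a (f lo))).
  - apply (filterlim_ext_loc (fun s => b * h s));
      [|exact (filterlim_comp _ _ _ h (scal b) _ _ _ Hh (filterlim_scal_r b (h lo)))].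
    assert (Hd : 0 < hi - lo) by lra.
    exists (mkposreal _ Hd); intros s Hs Hlo; change (Rabs (s - lo) < hi - lo) in Hs.
    apply Rabs_def2 in Hs; symmetry; apply E; lra.
Qed.

Lemma separable_cross_ratio (G : R -> R -> R) (a : R -> R) (U : R -> Prop) (lo hi : R) :
  lo < hi ->
  (forall s u, lo < s < hi -> U u -> is_derive (fun s => G s u) s (a s * G s u)) ->
  (forall s u, lo < s < hi -> U u -> G s u <> 0) ->
  (forall u, U u -> filterlim (fun s => G s u) (at_right lo) (locally (G lo u))) ->
  forall s s' v w, lo <= s < hi -> lo <= s' < hi -> U v -> U w ->
  G s v * G s' w = G s' v * G s w.
Proof.
  intros Hlh HG HG0 Hlim.
  assert (Hopen : forall s s' v w, lo < s < hi -> lo < s' < hi -> U v -> U w ->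
            G s v * G s' w = G s' v * G s w).
  { intros s s' v w Hs Hs' Hv Hw.
    apply (same_log_derivative (fun s => G s v) (fun s => G s w) a lo hi); auto. }
  assert (Hhalf : forall s s' v w, lo <= s < hi -> lo < s' < hi -> U v -> U w ->
            G s v * G s' w = G s' v * G s w).
  { intros s s' v w Hs Hs' Hv Hw.
    destruct (Req_dec s lo) as [->|Hne]; [|apply Hopen; auto; lra].
    rewrite (Rmult_comm (G lo v)).
    apply (right_limit_lin (fun s => G s v) (fun s => G s w) _ _ lo hi Hlh); auto.
    intros r Hr; rewrite (Rmult_comm _ (G r v)); now apply Hopen. }
  intros s s' v w Hs Hs' Hv Hw.
  destruct (Req_dec s' lo) as [->|Hne]; [|apply Hhalf; auto; lra].
  destruct (Req_dec s lo) as [->|Hne']; [ring|].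
  symmetry; apply Hhalf; auto; lra.
Qed.

Lemma periodic_shift_Z (F : R -> R) (p : R) :
  (forall x, F (x + p) = F x) -> forall z x, F (x + IZR z * p) = F x.
Proof.
  intros Hp z; induction z as [|z IHz|z IHz] using Z.peano_ind; intros x.
  - now rewrite Rmult_0_l, Rplus_0_r.
  - rewrite succ_IZR; replace (x + (IZR z + 1) * p) with (x + IZR z * p + p) by ring.
    now rewrite Hp.
  - rewrite <- Z.sub_1_r, minus_IZR, <- Hp.
    replace (x + (IZR z - 1) * p + p) with (x + IZR z * p) by ring; apply IHz.
Qed.

Lemma periodic_reduce (F : R -> R) (p : R) :
  0 < p -> (forall x, F (x + p) = F x) -> forall x, exists y, 0 <= y < p /\ F x = F y.
Proof.
  intros Hp HF x.
  destruct (base_Int_part (x / p)) as [Hlo Hhi].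
  exists (x + IZR (- Int_part (x / p)) * p); split;
    [|symmetry; apply periodic_shift_Z, HF].
  rewrite opp_IZR; set (n := IZR (Int_part (x / p))) in *.
  replace (x + - n * p) with ((x / p - n) * p) by (field; lra).
  split; [apply Rmult_le_pos; lra|].
  rewrite <- (Rmult_1_l p) at 3; apply Rmult_lt_compat_r; lra.
Qed.

Lemma lin_rel_periodic (f h : R -> R) (a b p : R) :
  0 < p -> (forall x, f (x + p) = f x) -> (forall x, h (x + p) = h x) ->
  (forall x, 0 < x < p -> a * f x = b * h x) ->
  filterlim f (at_right 0) (locally (f 0)) -> filterlim h (at_right 0) (locally (h 0)) ->
  forall x, a * f x = b * h x.
Proof.
  intros Hp Hf Hh E Hfl Hhl x.
  destruct (periodic_reduce (fun x => a * f x - b * h x) p Hp) with x as [y [Hy Exy]].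
  { intros z; now rewrite Hf, Hh. }
  enough (a * f y = b * h y) by lra.
  destruct (Req_dec y 0) as [->|Hne]; [exact (right_limit_lin f h a b 0 p Hp E Hfl Hhl)|].
  apply E; lra.
Qed.

Lemma div_RInt_scale (f h : R -> R) (k a b x : R) :
  k <> 0 -> (forall y, f y = k * h y) -> ex_RInt h a b ->
  f x / RInt f a b = h x / RInt h a b.
Proof.
  intros Hk Hf Hh.
  assert (E : RInt f a b = k * RInt h a b).
  { transitivity (RInt (V := R_CompleteNormedModule) (fun y => scal k (h y)) a b).
    - apply RInt_ext; intros; apply Hf.
    - exact (RInt_scal (V := R_CompleteNormedModule) h a b k Hh). }
  rewrite E, Hf.
  unfold Rdiv; rewrite Rinv_mult.
  replace (k * h x * (/ k * / RInt h a b)) with (k * / k * (h x * / RInt h a b)) by ring.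
  rewrite Rinv_r by exact Hk; ring.
Qed.

Definition cont2V_within (D : R -> R -> Prop) (c : R -> R -> V3) (t u : R) : Prop :=
  cont2_within D (fun t u => vx (c t u)) t u /\ cont2_within D (fun t u => vy (c t u)) t u /\
  cont2_within D (fun t u => vz (c t u)) t u.

Lemma filterlim_vnorm {A : Type} (F : (A -> Prop) -> Prop) {FF : Filter F}
  (c : A -> V3) (v : V3) :
  filterlim (fun a => vx (c a)) F (locally (vx v)) ->
  filterlim (fun a => vy (c a)) F (locally (vy v)) ->
  filterlim (fun a => vz (c a)) F (locally (vz v)) ->
  filterlim (fun a => vnorm (c a)) F (locally (vnorm v)).
Proof.
  intros Hx Hy Hz.
  apply (filterlim_comp _ _ _ _ sqrt _ (locally (vdot v v))); [|apply continuous_sqrt].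
  assert (Hsq : forall h l, filterlim h F (locally l) ->
            filterlim (fun a => h a * h a) F (locally (l * l))).
  { intros h l Hh; apply (filterlim_comp_2 h h Rmult Hh Hh).
    apply (filterlim_mult (K := R_AbsRing) l l). }
  assert (Hplus : forall h k l m, filterlim h F (locally l) -> filterlim k F (locally m) ->
            filterlim (fun a => h a + k a) F (locally (l + m))).
  { intros h k l m Hh Hk; apply (filterlim_comp_2 h k Rplus Hh Hk).
    apply (filterlim_plus (V := R_NormedModule) l m). }
  exact (Hplus _ _ _ _ (Hplus _ _ _ _ (Hsq _ _ Hx) (Hsq _ _ Hy)) (Hsq _ _ Hz)).
Qed.

Lemma cont2_within_continuous_u (D : R -> R -> Prop) (f : R -> R -> R) (t u : R) :
  (forall w, D t w) -> cont2_within D f t u -> continuous (f t) u.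
Proof.
  intros HD Hc.
  refine (filterlim_comp _ _ _ (fun w => (t, w)) (fun p => f (fst p) (snd p)) _ _ _
    (fun P HP => _) Hc).
  destruct HP as [e He]; exists e; intros w Hw.
  apply He; [split; [apply ball_center | exact Hw] | apply HD].
Qed.

Lemma cont2_within_right_t (D : R -> R -> Prop) (f : R -> R -> R) (t u hi : R) :
  t < hi -> (forall s, t < s < hi -> D s u) -> cont2_within D f t u ->
  filterlim (fun s => f s u) (at_right t) (locally (f t u)).
Proof.
  intros Hhi HD Hc.
  refine (filterlim_comp _ _ _ (fun s => (s, u)) (fun p => f (fst p) (snd p)) _ _ _
    (fun P HP => _) Hc).
  destruct HP as [e He].
  assert (Hd : 0 < Rmin e (hi - t)) by (apply Rmin_glb_lt; [apply cond_pos | lra]).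
  exists (mkposreal _ Hd); intros s Hs Hts; change (Rabs (s - t) < Rmin e (hi - t)) in Hs.
  pose proof (Rmin_l e (hi - t)); pose proof (Rmin_r e (hi - t)).
  apply Rabs_def2 in Hs.
  apply He; [split; [change (Rabs (s - t) < e); apply Rabs_def1; lra | apply ball_center]|].
  apply (HD s); lra.
Qed.

Lemma continuous_speed_slice (D : R -> R -> Prop) (c : R -> R -> V3) (t u : R) :
  (forall w, D t w) -> cont2V_within D (pduV c) t u -> continuous (speed c t) u.
Proof.
  intros HD (Hx & Hy & Hz).
  exact (filterlim_vnorm _ (pduV c t) _ (cont2_within_continuous_u _ _ _ _ HD Hx)
    (cont2_within_continuous_u _ _ _ _ HD Hy) (cont2_within_continuous_u _ _ _ _ HD Hz)).
Qed.

Lemma speed_right_continuous (D : R -> R -> Prop) (c : R -> R -> V3) (t u hi : R) :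
  t < hi -> (forall s, t < s < hi -> D s u) -> cont2V_within D (pduV c) t u ->
  filterlim (fun s => speed c s u) (at_right t) (locally (speed c t u)).
Proof.
  intros Hhi HD (Hx & Hy & Hz).
  exact (filterlim_vnorm _ (fun s => pduV c s u) _ (cont2_within_right_t _ _ _ _ _ Hhi HD Hx)
    (cont2_within_right_t _ _ _ _ _ Hhi HD Hy) (cont2_within_right_t _ _ _ _ _ Hhi HD Hz)).
Qed.

Lemma pduV_periodic (c : R -> R -> V3) (p : R) :
  (forall t u, c t (u + p) = c t u) -> forall t u, pduV c t (u + p) = pduV c t u.
Proof.
  intros Hc t u.
  assert (Hshift : forall f : R -> R, (forall y, f (y + p) = f y) ->
            Derive f (u + p) = Derive f u).
  { intros f Hf; change (Derive_n f 1 (u + p) = Derive f u).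
    rewrite <- Derive_n_comp_trans; apply Derive_ext; intros y; apply Hf. }
  unfold pduV, pdu; f_equal; apply Hshift; intros y; now rewrite Hc.
Qed.

Lemma speed_periodic (c : R -> R -> V3) (p : R) :
  (forall t u, c t (u + p) = c t u) -> forall t u, speed c t (u + p) = speed c t u.
Proof. intros Hc t u; unfold speed; now rewrite (pduV_periodic c p Hc). Qed.

(** * The flow *)

Section Flow.

Variables (tb : R) (gam : R -> R -> V3) (th vT : R -> R -> R) (vT0 : R -> R).
Hypothesis closed : forall t u, gam t (u + 2 * PI) = gam t u.
Hypothesis smooth_gam : smoothV_on (fun t _ => 0 < t < tb) gam.
Hypothesis smooth_th : smooth_on (fun t _ => 0 < t < tb) th.
Hypothesis continuous_pduV :
  forall t u, 0 <= t < tb -> cont2V_within (fun t' _ => 0 <= t' < tb) (pduV gam) t u.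
Hypothesis speed_pos : forall t u, 0 <= t < tb -> 0 < speed gam t u.
Hypothesis tangential_velocity : forall t u, 0 <= t < tb -> 0 <= u < 2 * PI ->
  vT t u = vT0 t + int_kpsi gam th t u
           - arclen gam t u / curve_length gam t * int_kpsi gam th t (2 * PI).
Hypothesis evolution : forall t u, 0 < t < tb ->
  pdtV gam t u = vadd (kappa_nu gam th t u) (vscale (vT t u) (tangent gam t u)).

Lemma is_derive_speed_flow (t u : R) :
  0 < t < tb -> 0 < u < 2 * PI ->
  is_derive (fun s => speed gam s u) t
    (- (int_kpsi gam th t (2 * PI) / curve_length gam t) * speed gam t u).
Proof.
  intros Ht Hu.
  assert (Ht0 : 0 <= t < tb) by lra.
  assert (Hpos : forall w, 0 < speed gam t w) by (intros; now apply speed_pos).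
  is_derive_value_eq; [exact (is_derive_speed_time tb gam th vT t u smooth_gam Ht Hpos
                                (fun w => evolution t w Ht))|].
  rewrite (is_derive_unique _ _ _ (is_derive_tangential_velocity tb gam th vT vT0 t u
    smooth_gam smooth_th Ht Hpos (fun w => tangential_velocity t w Ht0) Hu)).
  unfold Rdiv; ring.
Qed.

Lemma speed_cross_ratio (s s' v w : R) :
  0 <= s < tb -> 0 <= s' < tb -> 0 < v < 2 * PI -> 0 < w < 2 * PI ->
  speed gam s v * speed gam s' w = speed gam s' v * speed gam s w.
Proof.
  intros Hs Hs'; pose proof PI_RGT_0; assert (Htb : 0 < tb) by lra.
  apply (separable_cross_ratio (speed gam)
    (fun s => - (int_kpsi gam th s (2 * PI) / curve_length gam s)) (fun y => 0 < y < 2 * PI)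
    0 tb Htb); auto.
  - intros r y Hr Hy; exact (is_derive_speed_flow r y Hr Hy).
  - intros r y Hr _; apply Rgt_not_eq, speed_pos; lra.
  - intros y _; apply (speed_right_continuous (fun t' _ => 0 <= t' < tb) _ 0 y tb Htb);
      [intros; lra | apply continuous_pduV; lra].
Qed.

Lemma continuous_speed_flow (t u : R) : 0 <= t < tb -> continuous (speed gam t) u.
Proof.
  intros Ht; exact (continuous_speed_slice _ _ t u (fun _ => Ht) (continuous_pduV t u Ht)).
Qed.

Lemma speed_proportional (t t' : R) : 0 <= t < tb -> 0 <= t' < tb -> forall u,
  speed gam t PI * speed gam t' u = speed gam t' PI * speed gam t u.
Proof.
  intros Ht Ht'; pose proof PI_RGT_0.
  assert (Hright : forall r, 0 <= r < tb ->
            filterlim (speed gam r) (at_right 0) (locally (speed gam r 0))).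
  { intros r Hr.
    exact (filterlim_filter_le_1 _ (filter_le_within (F := locally 0) _)
      (continuous_speed_flow r 0 Hr)). }
  apply (lin_rel_periodic _ _ _ _ (2 * PI)); auto; [lra | | |].
  - intros x; apply speed_periodic, closed.
  - intros x; apply speed_periodic, closed.
  - intros v Hv; pose proof (speed_cross_ratio t' t v PI Ht' Ht Hv ltac:(lra)); lra.
Qed.

Lemma normalized_speed_eq (t t' u : R) : 0 <= t < tb -> 0 <= t' < tb ->
  speed gam t u / curve_length gam t = speed gam t' u / curve_length gam t'.
Proof.
  intros Ht Ht'.
  assert (0 < speed gam t PI) by now apply speed_pos.
  assert (0 < speed gam t' PI) by now apply speed_pos.
  apply (div_RInt_scale _ _ (speed gam t PI / speed gam t' PI)).
  - apply Rgt_not_eq, Rdiv_lt_0_compat; lra.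
  - intros y.
    transitivity (speed gam t' PI * speed gam t y / speed gam t' PI); [field; lra|].
    rewrite <- (speed_proportional t t' Ht Ht'); field; lra.
  - apply (ex_RInt_continuous (V := R_CompleteNormedModule)); intros.
    now apply continuous_speed_flow.
Qed.

End Flow.

Theorem mainTheorem2
  (tb : R) (gam : R -> R -> V3) (th vth vT : R -> R -> R) (vT0 : R -> R) :
  (* closed curves: 2*PI-periodic in u; theta is S^1-valued (a real lift) *)
  (forall t u, gam t (u + 2 * PI) = gam t u) ->
  (forall t u, cos (th t (u + 2 * PI)) = cos (th t u) /\
               sin (th t (u + 2 * PI)) = sin (th t u)) ->
  (* regularity: smooth on the open strip, d_u gamma continuous up to t = 0 *)
  smoothV_on (fun t _ => 0 < t < tb) gam ->
  smooth_on (fun t _ => 0 < t < tb) th ->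
  (forall t u, 0 <= t < tb ->
     cont2_within (fun t' _ => 0 <= t' < tb) (fun t u => vx (pduV gam t u)) t u /\
     cont2_within (fun t' _ => 0 <= t' < tb) (fun t u => vy (pduV gam t u)) t u /\
     cont2_within (fun t' _ => 0 <= t' < tb) (fun t u => vz (pduV gam t u)) t u) ->
  (forall t u, 0 <= t < tb -> 0 < speed gam t u) ->
  (* upsilon_theta is C^1 and d_t theta = upsilon_theta *)
  Ck_on 1 (fun t _ => 0 < t < tb) vth ->
  (forall t u, 0 < t < tb -> is_derive (fun t' => th t' u) t (vth t u)) ->
  (* upsilon_{T,0} is C^1 *)
  (forall t, 0 <= t < tb -> continuity_pt vT0 t) ->
  (forall t, 0 < t < tb -> ex_derive vT0 t /\ continuity_pt (Derive vT0) t) ->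
  (* the tangential velocity *)
  (forall t u, 0 <= t < tb -> 0 <= u < 2 * PI ->
     vT t u = vT0 t + int_kpsi gam th t u
              - arclen gam t u / curve_length gam t * int_kpsi gam th t (2 * PI)) ->
  (* the evolution d_t gamma = kappa nu_theta + upsilon_T T *)
  (forall t u, 0 < t < tb ->
     pdtV gam t u = vadd (kappa_nu gam th t u) (vscale (vT t u) (tangent gam t u))) ->
  forall u t1 t2, 0 <= t1 < tb -> 0 <= t2 < tb ->
    speed gam t1 u / curve_length gam t1 = speed gam t2 u / curve_length gam t2.
(* Only d_u upsilon_T enters. *)
Proof.
  intros Hper _ Hs Hsth Hc0 Hpos _ _ _ _ Hform Hev u t1 t2 Ht1 Ht2.
  exact (normalized_speed_eq tb gam th vT vT0 Hper Hs Hsth Hc0 Hpos Hform Hev t1 t2 u Ht1 Ht2).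
Qed.
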